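(* Let $(J,[\cdot,\cdot],\alpha)$ be a Hom-Jacobi-Jordan algebra, $V$ a vector space with a linear map $\beta\colon V\to V$, and $\rho\colon J\to\mathrm{End}(V)$ a linear map such that for all $x,y\in J$: $\rho(\alpha(x))\circ\beta=\beta\circ\rho(x)$ and $\rho([x,y])\circ\beta=-\rho(\alpha(x))\circ\rho(y)-\rho(\alpha(y))\circ\rho(x)$. Define $d^1$ on linear maps $f\colon J\to V$ with $\beta\circ f=f\circ\alpha$ by $d^1(f)(x,y)=f([x,y])-\rho(x)f(y)-\rho(y)f(x)$, and $d^2$ on symmetric bilinear maps $g\colon J\times J\to V$ by $d^2(g)(x,y,z)=g(\alpha(x),[y,z])+g(\alpha(y),[x,z])+g(\alpha(z),[x,y])+\rho(\alpha(x))g(y,z)+\rho(\alpha(y))g(x,z)+\rho(\alpha(z))g(x,y)$. Then $d^2(d^1(f))=0$ for every linear $f\colon J\to V$ with $\beta\circ f=f\circ\alpha$.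
   Context: A Hom-Jacobi-Jordan algebra is a triple $(J,[\cdot,\cdot],\alpha)$ with $J$ a vector space, $[\cdot,\cdot]$ a symmetric bilinear map and $\alpha$ linear, such that $\alpha([x,y])=[\alpha(x),\alpha(y)]$ and $[\alpha(x),[y,z]]+[\alpha(y),[z,x]]+[\alpha(z),[x,y]]=0$ for all $x,y,z\in J$. *)

From HB Require Import structures.
From mathcomp Require Import all_boot all_order all_algebra.
Set Implicit Arguments. Unset Strict Implicit. Unset Printing Implicit Defensive.
Import GRing.Theory.
Local Open Scope ring_scope.

Definition is_linear (K : fieldType) (U W : lmodType K) (f : U -> W) : Prop :=
  forall (a : K) (u v : U), f (a *: u + v) = a *: f u + f v.

Definition sym_bilinear (K : fieldType) (U W : lmodType K) (b : U -> U -> W) : Prop :=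
  (forall x y, b x y = b y x) /\
  (forall (a : K) x y z, b (a *: x + y) z = a *: b x z + b y z) /\
  (forall (a : K) x y z, b x (a *: y + z) = a *: b x y + b x z).

Definition HomJacobiJordan (K : fieldType) (J : lmodType K)
    (br : J -> J -> J) (alpha : J -> J) : Prop :=
  [/\ sym_bilinear br, is_linear alpha,
      (forall x y, alpha (br x y) = br (alpha x) (alpha y)) &
      (forall x y z, br (alpha x) (br y z) + br (alpha y) (br z x)
                     + br (alpha z) (br x y) = 0)].

Definition is_linear_rep (K : fieldType) (J V : lmodType K) (rho : J -> V -> V) : Prop :=
  (forall x, is_linear (rho x)) /\
  (forall (a : K) x y v, rho (a *: x + y) v = a *: rho x v + rho y v).

Definition d1 (K : fieldType) (J V : lmodType K) (br : J -> J -> J)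
    (rho : J -> V -> V) (f : J -> V) : J -> J -> V :=
  fun x y => f (br x y) - rho x (f y) - rho y (f x).

Definition d2 (K : fieldType) (J V : lmodType K) (br : J -> J -> J) (alpha : J -> J)
    (rho : J -> V -> V) (g : J -> J -> V) : J -> J -> J -> V :=
  fun x y z => g (alpha x) (br y z) + g (alpha y) (br x z) + g (alpha z) (br x y)
             + rho (alpha x) (g y z) + rho (alpha y) (g x z) + rho (alpha z) (g x y).

(* In d1 f (alpha x) [y,z] the value f (alpha x)
   equals beta (f x), so the hypothesis on rho [y,z] o beta turns it into
   rho (alpha y) (rho z (f x)) + rho (alpha z) (rho y (f x)); the terms
   rho (alpha x) (f [y,z]) cancel within each cyclic summand; and the
   remaining terms of rho (alpha x) (d1 f y z) are the same six terms
   rho (alpha a) (rho b (f c)), (a, b, c) a permutation of (x, y, z), with the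
   opposite sign. What is left is f of the Jacobiator, which vanishes. *)
From HB Require Import structures.
From mathcomp Require Import all_boot all_order all_algebra.
Set Implicit Arguments.
Unset Strict Implicit.

Import GRing.Theory.
Local Open Scope ring_scope.

Section IsLinear.

Variables (K : fieldType) (U W : lmodType K) (g : U -> W).
Hypothesis g_linear : is_linear g.

Lemma is_linearD u v : g (u + v) = g u + g v.
Proof. by rewrite -[u]scale1r g_linear !scale1r. Qed.

Lemma is_linear0 : g 0 = 0.
Proof. by have := g_linear (-1) 0 0; rewrite scaler0 addr0 scaleN1r addNr. Qed.

Lemma is_linearB u v : g (u - v) = g u - g v.
Proof. by rewrite addrC -scaleN1r g_linear scaleN1r addrC. Qed.

End IsLinear.

Lemma d2_cyclic (K : fieldType) (J V : lmodType K) (br : J -> J -> J)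
    (alpha : J -> J) (rho : J -> V -> V) (g : J -> J -> V) (x y z : J) :
  d2 br alpha rho g x y z =
    (g (alpha x) (br y z) + rho (alpha x) (g y z))
  + (g (alpha y) (br x z) + rho (alpha y) (g x z))
  + (g (alpha z) (br x y) + rho (alpha z) (g x y)).
Proof. by rewrite /d2 (GRing.add).[AC (6) ((1*4)*(2*5)*(3*6))]. Qed.

Section CoboundarySquare.

Variables (K : fieldType) (J V : lmodType K).
Variables (br : J -> J -> J) (alpha : J -> J) (beta : V -> V).
Variables (rho : J -> V -> V) (f : J -> V).

Hypothesis rho_linear : forall x, is_linear (rho x).
Hypothesis rho_bracket : forall x y v,
  rho (br x y) (beta v) = - rho (alpha x) (rho y v) - rho (alpha y) (rho x v).
Hypothesis f_linear : is_linear f.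
Hypothesis f_alpha : forall x, beta (f x) = f (alpha x).

Let rho2 a b c := rho (alpha a) (rho b (f c)).

Lemma d1_cyclic_term x y z :
  d1 br rho f (alpha x) (br y z) + rho (alpha x) (d1 br rho f y z) =
    f (br (alpha x) (br y z))
  + ((rho2 y z x + rho2 z y x) - (rho2 x y z + rho2 x z y)).
Proof.
rewrite /d1 -f_alpha rho_bracket -opprD opprK !(is_linearB (rho_linear _)) opprD.
by rewrite !addrA (GRing.add).[ACl 1*3*4*6*7*2*5] subrK.
Qed.

Lemma d2_d1 x y z :
  d2 br alpha rho (d1 br rho f) x y z =
    f (br (alpha x) (br y z) + br (alpha y) (br x z) + br (alpha z) (br x y)).
Proof.
have rho2_permutations :
    (rho2 y z x + rho2 z y x) + (rho2 x z y + rho2 z x y)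
      + (rho2 x y z + rho2 y x z)
  = (rho2 x y z + rho2 x z y) + (rho2 y x z + rho2 y z x)
      + (rho2 z x y + rho2 z y x).
  by rewrite (GRing.add).[AC (2*2*2) ((5*3)*(6*1)*(4*2))].
rewrite d2_cyclic !d1_cyclic_term.
rewrite [LHS](GRing.add).[AC (2*2*2) ((1*3*5)*(2*4*6))].
rewrite [X in _ + X](GRing.add).[AC (2*2*2) ((1*3*5)*(2*4*6))] -!opprD.
by rewrite rho2_permutations subrr addr0 !(is_linearD f_linear).
Qed.

End CoboundarySquare.

Theorem theorem2p7 (K : fieldType) (J V : lmodType K)
    (br : J -> J -> J) (alpha : J -> J) (beta : V -> V) (rho : J -> V -> V)
    (hJ : HomJacobiJordan br alpha)
    (hbeta : is_linear beta)
    (hrho : is_linear_rep rho)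
    (hrho1 : forall (x : J) (v : V), rho (alpha x) (beta v) = beta (rho x v))
    (hrho2 : forall (x y : J) (v : V),
        rho (br x y) (beta v) = - rho (alpha x) (rho y v) - rho (alpha y) (rho x v))
    (f : J -> V) (hf : is_linear f) (hfa : forall x, beta (f x) = f (alpha x)) :
  forall x y z : J, d2 br alpha rho (d1 br rho f) x y z = 0.
Proof.
move=> x y z.
case: hJ => [[br_sym _]] _ _ jacobi.
case: hrho => rho_linear _.
by rewrite (d2_d1 rho_linear hrho2 hf hfa) (br_sym x z) jacobi (is_linear0 hf).
Qed.
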